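(* There is an absolute constant $c_0>0$ such that the following holds for every $0<\beta<1$. Let $t$ be a $\beta$-balanced full binary tree with $n\ge2$ leaves whose nodes carry at most $\sigma\ge2$ different labels. Then the minimal dag of $t$ has at most $\frac{\alpha_\beta\cdot n}{\log_\sigma n}$ nodes, where $\alpha_\beta = c_0\big(1+\log_{1+\beta}(\beta^{-1})\big)$ depends only on $\beta$.
   Context: A full binary tree is a finite rooted ordered labelled tree in which every node has either $0$ or $2$ children. The leaf size of a node is the number of leaves of the subtree rooted at it. An inner node $v$ with children $v_1,v_2$ of leaf sizes $n_1,n_2$ is $\beta$-balanced if $n_1\ge\beta n_2$ and $n_2\ge\beta n_1$. The tree $t$ is $\beta$-balanced if for all inner nodes $u,v$ such that $v$ is a child of $u$, at least one of $u$, $v$ is $\beta$-balanced. The minimal dag of a tree has one node for each isomorphism class (as labelled ordered trees) of subtrees of the tree; its size is its number of nodes. *)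

From Stdlib Require Import Reals List Arith.
Import ListNotations.
Open Scope R_scope.

Inductive tree (A : Type) : Type :=
| Leaf : A -> tree A
| Node : A -> tree A -> tree A -> tree A.
Arguments Leaf {A} _.
Arguments Node {A} _ _ _.

Section Trees.
Context {A : Type} (eqA : forall x y : A, {x = y} + {x <> y}).

Definition tree_eq_dec : forall s t : tree A, {s = t} + {s <> t}.
Proof. decide equality. Defined.

Fixpoint leaves (t : tree A) : nat :=
  match t with Leaf _ => 1%nat | Node _ l r => (leaves l + leaves r)%nat end.

Fixpoint labels (t : tree A) : list A :=
  match t with Leaf a => [a] | Node a l r => a :: labels l ++ labels r end.

Fixpoint subtrees (t : tree A) : list (tree A) :=
  match t with
  | Leaf _ => [t]
  | Node _ l r => t :: subtrees l ++ subtrees r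
  end.

Definition num_labels (t : tree A) : nat := length (nodup eqA (labels t)).

(* size of the minimal dag = number of isomorphism classes (= equality classes
   as labelled ordered trees) of subtrees *)
End Trees.
Definition dag_size {A} (eqA : forall x y : A, {x = y} + {x <> y}) (t : tree A) : nat :=
  length (nodup (tree_eq_dec eqA) (subtrees t)).

Definition is_inner {A} (t : tree A) : Prop :=
  match t with Leaf _ => False | Node _ _ _ => True end.

Definition node_balanced {A} (beta : R) (t : tree A) : Prop :=
  match t with
  | Leaf _ => False
  | Node _ l r =>
      INR (leaves l) >= beta * INR (leaves r) /\ INR (leaves r) >= beta * INR (leaves l)
  end.

Fixpoint tree_balanced {A} (beta : R) (t : tree A) : Prop :=
  match t with
  | Leaf _ => True
  | Node _ l r =>
      tree_balanced beta l /\ tree_balanced beta r /\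
      (forall c, (c = l \/ c = r) -> is_inner c ->
          node_balanced beta t \/ node_balanced beta c)
  end.

Definition logb (b x : R) : R := ln x / ln b.

(* Call a subtree heavy if it has more than k leaves.  Distinct light subtrees are
   determined by their preorder codes, words of length < 2k over an alphabet of
   2 sigma letters, so there are at most (2 sigma + 1)^(2k) of them.  Since of any
   inner node and its inner child one is balanced, a potential argument charges
   beta k leaves to each heavy node, giving at most 4n/(beta k) heavy nodes.
   Choosing k of order log_sigma n makes the first count O(sqrt n) and the second
   O(n / (beta log_sigma n)); finally 1/beta <= 1 + log_(1+beta)(1/beta). *)

From Stdlib Require Import Reals List Lia Lra FinFun ZArith.
Import ListNotations.
Open Scope R_scope.

Section Words.
Context {B : Type} (Sig : list B).

Fixpoint words_upto (N : nat) : list (list B) :=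
  match N with
  | O => [[]]
  | S N => [] :: flat_map (fun a => map (cons a) (words_upto N)) Sig
  end.

Lemma length_words_upto N : (length (words_upto N) <= (length Sig + 1) ^ N)%nat.
Proof.
  induction N as [|N IHN]; simpl; [lia|].
  rewrite (flat_map_constant_length (c := length (words_upto N)))
    by (intros; apply length_map).
  pose proof (Nat.pow_le_mono_r (length Sig + 1) 0 N ltac:(lia) ltac:(lia)).
  simpl in *. nia.
Qed.

Lemma words_upto_complete N w :
  (length w <= N)%nat -> incl w Sig -> In w (words_upto N).
Proof.
  revert w; induction N as [|N IHN]; intros [|a w] Hlen Hincl; simpl in *;
    auto; try lia.
  right. apply in_flat_map. exists a. split; [apply Hincl; now left|].
  apply in_map, IHN; [lia|]. intros y Hy. apply Hincl. now right.
Qed.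

Lemma NoDup_words_length ws N :
  NoDup ws -> (forall w, In w ws -> (length w <= N)%nat /\ incl w Sig) ->
  (length ws <= (length Sig + 1) ^ N)%nat.
Proof.
  intros Hnd Hws. eapply Nat.le_trans; [|apply (length_words_upto N)].
  apply NoDup_incl_length; [exact Hnd|].
  intros w Hw. destruct (Hws w Hw). now apply words_upto_complete.
Qed.

End Words.

Lemma length_nodup_le {C : Type} (dec : forall x y : C, {x = y} + {x <> y}) l :
  (length (nodup dec l) <= length l)%nat.
Proof. apply NoDup_incl_length; [apply NoDup_nodup|]. intros x. apply nodup_In. Qed.

Lemma length_nodup_filter_split {C : Type} (dec : forall x y : C, {x = y} + {x <> y})
    (p : C -> bool) l :
  (length (nodup dec l) <=
   length (nodup dec (filter p l)) + length (filter (fun u => negb (p u)) l))%nat.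
Proof.
  rewrite <- length_app. apply NoDup_incl_length; [apply NoDup_nodup|].
  intros x Hx. apply nodup_In in Hx. apply in_or_app.
  destruct (p x) eqn:Hp; [left; apply nodup_In | right]; apply filter_In;
    rewrite ?Hp; auto.
Qed.

Section Subtrees.
Context {A : Type} (eqA : forall x y : A, {x = y} + {x <> y}).

Fixpoint tree_code (t : tree A) : list (bool * A) :=
  match t with
  | Leaf a => [(false, a)]
  | Node a l r => (true, a) :: tree_code l ++ tree_code r
  end.

Lemma tree_code_app_inj t1 t2 w1 w2 :
  tree_code t1 ++ w1 = tree_code t2 ++ w2 -> t1 = t2 /\ w1 = w2.
Proof.
  revert t2 w1 w2.
  induction t1 as [a|a l IHl r IHr]; intros [b|b l2 r2] w1 w2 H;
    simpl in H; inversion H as [[Hab Hw]]; subst; auto.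
  rewrite <- !app_assoc in Hw.
  destruct (IHl _ _ _ Hw) as [-> Hr]. destruct (IHr _ _ _ Hr) as [-> ->]. auto.
Qed.

Lemma tree_code_inj : Injective tree_code.
Proof.
  intros t1 t2 H. apply (tree_code_app_inj t1 t2 [] []). now rewrite !app_nil_r.
Qed.

Lemma length_tree_code t : (length (tree_code t) + 1 = 2 * leaves t)%nat.
Proof. induction t; simpl; rewrite ?length_app; lia. Qed.

Lemma tree_code_labels t x : In x (tree_code t) -> In (snd x) (labels t).
Proof.
  induction t as [a|a l IHl r IHr]; simpl; intros Hx.
  - destruct Hx as [<-|[]]; now left.
  - destruct Hx as [<-|Hx]; [now left|right].
    apply in_app_or in Hx. apply in_or_app. destruct Hx; auto.
Qed.

Lemma subtrees_labels_incl (t u : tree A) : In u (subtrees t) -> incl (labels u) (labels t).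
Proof.
  induction t as [a|a l IHl r IHr]; simpl; intros Hu.
  - destruct Hu as [<-|[]]. apply incl_refl.
  - destruct Hu as [<-|Hu]; [apply incl_refl|].
    intros y Hy. right. apply in_or_app.
    apply in_app_or in Hu as [Hu|Hu]; [left; now apply (IHl Hu) | right; now apply (IHr Hu)].
Qed.

Lemma length_subtrees (t : tree A) : (length (subtrees t) + 1 = 2 * leaves t)%nat.
Proof. induction t; simpl; rewrite ?length_app; lia. Qed.

Lemma leaves_subtrees_le (t u : tree A) : In u (subtrees t) -> (leaves u <= leaves t)%nat.
Proof.
  induction t as [a|a l IHl r IHr]; simpl; intros Hu.
  - destruct Hu as [<-|[]]. simpl; lia.
  - destruct Hu as [<-|Hu]; [simpl; lia|].
    apply in_app_or in Hu as [Hu|Hu]; [apply IHl in Hu | apply IHr in Hu]; lia.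
Qed.

Lemma dag_size_le_leaves t : (dag_size eqA t <= 2 * leaves t)%nat.
Proof.
  pose proof (length_nodup_le (tree_eq_dec eqA) (subtrees t)).
  pose proof (length_subtrees t). unfold dag_size. lia.
Qed.

Lemma small_subtrees_count t k :
  (length (nodup (tree_eq_dec eqA) (filter (fun u => leaves u <=? k) (subtrees t)))
    <= (2 * num_labels eqA t + 1) ^ (2 * k))%nat.
Proof.
  rewrite <- (length_map tree_code).
  replace (2 * num_labels eqA t)%nat
    with (length (list_prod [true; false] (nodup eqA (labels t))))
    by (rewrite length_prod; reflexivity).
  apply NoDup_words_length.
  - apply Injective_map_NoDup; [apply tree_code_inj | apply NoDup_nodup].
  - intros w Hw. apply in_map_iff in Hw as (u & <- & Hu).
    apply nodup_In, filter_In in Hu as [Hu Hk]. apply Nat.leb_le in Hk.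
    split; [pose proof (length_tree_code u); lia|].
    intros [b a] Hx. apply in_prod; [destruct b; simpl; auto|].
    apply nodup_In, (subtrees_labels_incl t u Hu), (tree_code_labels u _ Hx).
Qed.

Definition heavy_count (k : nat) (t : tree A) : nat :=
  length (filter (fun u => k <? leaves u) (subtrees t)).

Lemma dag_size_le_small_heavy t k :
  (dag_size eqA t <= (2 * num_labels eqA t + 1) ^ (2 * k) + heavy_count k t)%nat.
Proof.
  pose proof (length_nodup_filter_split (tree_eq_dec eqA) (fun u => leaves u <=? k)
                (subtrees t)) as Hsplit.
  pose proof (small_subtrees_count t k).
  unfold dag_size, heavy_count.
  cbv beta in Hsplit.
  rewrite <- (filter_ext _ _ (fun u => Nat.ltb_antisym (leaves u) k)) in Hsplit. lia.
Qed.

End Subtrees.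

Section Heavy.
Context {A : Type} (beta : R) (k : nat).
Hypothesis beta_bounds : 0 <= beta <= 1.
Hypothesis k_pos : (1 <= k)%nat.

Let P := beta * INR k.

Let P_nonneg : 0 <= P.
Proof. unfold P. pose proof (pos_INR k). nra. Qed.

Lemma heavy_count_Node a (l r : tree A) :
  heavy_count k (Node a l r) =
  ((if k <? leaves (Node a l r) then 1 else 0) + heavy_count k l + heavy_count k r)%nat.
Proof.
  unfold heavy_count. cbn [subtrees filter].
  destruct (k <? leaves (Node a l r)); simpl; rewrite filter_app, length_app; lia.
Qed.

Lemma heavy_count_light (t : tree A) : (leaves t <= k)%nat -> heavy_count k t = 0%nat.
Proof.
  intros Ht. unfold heavy_count.
  rewrite (filter_ext_in _ (fun _ => false)), filter_false; [reflexivity|].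
  intros u Hu. apply Nat.ltb_ge. pose proof (leaves_subtrees_le t u Hu). lia.
Qed.

Lemma heavy_is_inner (t : tree A) : (k < leaves t)%nat -> is_inner t.
Proof. destruct t; simpl; [lia | auto]. Qed.

Lemma heavy_potential_one_heavy_child (h : tree A) (ns : R) :
  0 <= ns -> (k < leaves h)%nat ->
  P * INR (heavy_count k h) + 2 * P <= 4 * INR (leaves h) ->
  (node_balanced beta h -> P * INR (heavy_count k h) + 3 * P <= 4 * INR (leaves h)) ->
  beta * INR (leaves h) <= ns \/ node_balanced beta h ->
  P * (1 + INR (heavy_count k h)) + 2 * P <= 4 * (INR (leaves h) + ns) /\
  (beta * INR (leaves h) <= ns ->
   P * (1 + INR (heavy_count k h)) + 3 * P <= 4 * (INR (leaves h) + ns)).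
Proof.
  intros Hns0 Hh Hweak Hstrong Hchoice.
  assert (HPh : P <= beta * INR (leaves h))
    by (apply lt_INR in Hh; unfold P; nra).
  pose proof P_nonneg.
  destruct Hchoice as [Hns | Hbal]; [|specialize (Hstrong Hbal)]; split; intros; lra.
Qed.

(* Every heavy node is charged [P = beta k] leaves, with a reserve of [2P], or [3P]
   at a balanced node.  A parent whose heavy weight sits in a single child pays its
   own [P] from that reserve: either the child is balanced, or the parent is and
   then its light child has at least [beta * leaves h >= P] leaves. *)
Lemma heavy_potential (t : tree A) :
  tree_balanced beta t -> (k < leaves t)%nat ->
  P * INR (heavy_count k t) + 2 * P <= 4 * INR (leaves t) /\
  (node_balanced beta t -> P * INR (heavy_count k t) + 3 * P <= 4 * INR (leaves t)).
Proof.
  pose proof P_nonneg.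
  induction t as [a|a l IHl r IHr]; intros Hbal Hheavy; [simpl in Hheavy; lia|].
  destruct Hbal as (Hbl & Hbr & Hchild).
  rewrite heavy_count_Node, (proj2 (Nat.ltb_lt _ _) Hheavy).
  simpl leaves in *. rewrite !plus_INR.
  destruct (Nat.lt_ge_cases k (leaves l)) as [Hl|Hl];
    destruct (Nat.lt_ge_cases k (leaves r)) as [Hr|Hr].
  - destruct (IHl Hbl Hl) as [Hwl _], (IHr Hbr Hr) as [Hwr _].
    simpl INR. split; intros; lra.
  - rewrite (heavy_count_light r Hr).
    destruct (IHl Hbl Hl) as [Hwl Hsl].
    destruct (heavy_potential_one_heavy_child l (INR (leaves r)) (pos_INR _) Hl Hwl Hsl)
      as [Hw Hs].
    + destruct (Hchild l (or_introl eq_refl) (heavy_is_inner l Hl)) as [[_ ?]|?];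
        [left; lra | now right].
    + simpl INR. split; [lra | intros [_ Hb]; specialize (Hs ltac:(lra)); lra].
  - rewrite (heavy_count_light l Hl).
    destruct (IHr Hbr Hr) as [Hwr Hsr].
    destruct (heavy_potential_one_heavy_child r (INR (leaves l)) (pos_INR _) Hr Hwr Hsr)
      as [Hw Hs].
    + destruct (Hchild r (or_intror eq_refl) (heavy_is_inner r Hr)) as [[? _]|?];
        [left; lra | now right].
    + simpl INR. split; [lra | intros [Hb _]; specialize (Hs ltac:(lra)); lra].
  - rewrite (heavy_count_light l Hl), (heavy_count_light r Hr).
    apply lt_INR in Hheavy. rewrite plus_INR in Hheavy.
    assert (P <= INR k) by (unfold P; pose proof (pos_INR k); nra).
    simpl INR. split; intros; lra.
Qed.

Lemma heavy_count_bound (t : tree A) :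
  tree_balanced beta t -> beta * INR k * INR (heavy_count k t) <= 4 * INR (leaves t).
Proof.
  intros Hbal. fold P.
  destruct (Nat.lt_ge_cases k (leaves t)) as [Hheavy|Hlight].
  - destruct (heavy_potential t Hbal Hheavy) as [Hw _].
    pose proof P_nonneg. lra.
  - rewrite (heavy_count_light t Hlight). simpl INR. pose proof (pos_INR (leaves t)). lra.
Qed.

End Heavy.

Lemma ln_le_sub_1 u : 0 < u -> ln u <= u - 1.
Proof. intros Hu. pose proof (exp_ineq1_le (ln u)). rewrite exp_ln in *; lra. Qed.

Lemma ln_le_compat u v : 0 < u <= v -> ln u <= ln v.
Proof.
  intros [Hu [Huv| ->]]; [left; now apply ln_increasing | apply Rle_refl].
Qed.

Lemma inv_le_one_plus_logb beta :
  0 < beta < 1 -> / beta <= 1 + logb (1 + beta) (/ beta).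
Proof.
  intros Hb. unfold logb.
  assert (Hu : 1 - beta <= ln (/ beta)).
  { pose proof (ln_le_sub_1 beta ltac:(lra)). rewrite ln_Rinv; lra. }
  assert (Hv : 0 < ln (1 + beta) <= beta).
  { split; [rewrite <- ln_1; apply ln_increasing; lra|].
    pose proof (ln_le_sub_1 (1 + beta) ltac:(lra)). lra. }
  replace (/ beta) with (1 + (1 - beta) / beta) at 1 by (field; lra).
  apply Rplus_le_compat_l. apply Rle_trans with (ln (/ beta) / beta).
  - apply Rmult_le_compat_r; [left; apply Rinv_0_lt_compat|]; lra.
  - apply Rmult_le_compat_l; [lra|]. apply Rinv_le_contravar; lra.
Qed.

Lemma exists_nat_scale x :
  24 <= x -> exists k, (1 <= k)%nat /\ 12 * INR k <= x < 24 * INR k.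
Proof.
  intros Hx. destruct (archimed (x / 12)) as [Hup Hup1].
  assert (Hup2 : (2 < up (x / 12))%Z) by (apply lt_IZR; lra).
  exists (Z.to_nat (up (x / 12) - 1)).
  rewrite INR_IZR_INZ, Z2Nat.id, minus_IZR by lia.
  split; [lia | lra].
Qed.

Lemma pow_le_sqrt s n m :
  1 < s -> 0 < n -> 2 * INR m <= logb s n -> s ^ m <= sqrt n.
Proof.
  intros Hs Hn Hm.
  rewrite <- Rpower_pow, <- Rpower_sqrt by lra.
  replace n with (Rpower s (logb s n)) by (apply Rpower_Rlog; lra).
  rewrite Rpower_mult. apply Rle_Rpower; lra.
Qed.

Lemma logb_mul_sqrt_le s n :
  2 <= s -> 1 <= n -> logb s n * sqrt n <= 4 * n.
Proof.
  intros Hs Hn.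
  assert (Hsq : sqrt n * sqrt n = n) by (apply sqrt_sqrt; lra).
  assert (Hsq0 : 0 < sqrt n) by (apply sqrt_lt_R0; lra).
  assert (Hln : ln n <= 2 * sqrt n).
  { rewrite <- Hsq at 1. rewrite ln_mult by lra. pose proof (ln_le_sub_1 _ Hsq0). lra. }
  assert (Hlns : / 2 < ln s)
    by (pose proof ln_lt_2; pose proof (ln_le_compat 2 s ltac:(lra)); lra).
  assert (Hln0 : 0 <= ln n) by (rewrite <- ln_1; apply ln_le_compat; lra).
  unfold logb.
  apply Rle_trans with (2 * ln n * sqrt n).
  - apply Rmult_le_compat_r; [lra|]. unfold Rdiv.
    rewrite (Rmult_comm 2). apply Rmult_le_compat_l; [lra|].
    rewrite <- (Rinv_inv 2). apply Rinv_le_contravar; lra.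
  - nra.
Qed.

Lemma logb_pos b y : 1 < b -> 1 < y -> 0 < logb b y.
Proof.
  intros Hb Hy. unfold logb.
  apply Rdiv_lt_0_compat; rewrite <- ln_1; apply ln_increasing; lra.
Qed.

Lemma pow_odd_le_pow_cube m sigma k :
  (m <= sigma)%nat -> (2 <= sigma)%nat ->
  ((2 * m + 1) ^ (2 * k) <= sigma ^ (6 * k))%nat.
Proof.
  intros Hm Hs.
  replace (6 * k)%nat with (3 * (2 * k))%nat by lia.
  rewrite (Nat.pow_mul_r sigma 3). apply Nat.pow_le_mono_l. simpl.
  assert (4 <= sigma * sigma)%nat by nia. nia.
Qed.

Lemma dag_size_mul_logb_le {A : Type} (eqA : forall x y : A, {x = y} + {x <> y})
    beta (t : tree A) sigma :
  0 < beta < 1 -> tree_balanced beta t -> (2 <= leaves t)%nat -> (2 <= sigma)%nat ->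
  (num_labels eqA t <= sigma)%nat ->
  INR (dag_size eqA t) * beta * logb (INR sigma) (INR (leaves t)) <= 100 * INR (leaves t).
Proof.
  intros Hb Hbal Hn Hs Hlab.
  assert (Hn2 : 2 <= INR (leaves t)) by (apply (le_INR 2); lia).
  assert (Hs2 : 2 <= INR sigma) by (apply (le_INR 2); lia).
  set (n := INR (leaves t)) in *. set (s := INR sigma) in *. set (x := logb s n).
  assert (Hx : 0 < x) by (apply logb_pos; lra).
  assert (Hdag := le_INR _ _ (dag_size_le_leaves eqA t)).
  rewrite mult_INR in Hdag. fold n in Hdag. simpl (INR 2) in Hdag.
  destruct (Rle_or_lt x 24) as [Hx24 | Hx24].
  { pose proof (pos_INR (dag_size eqA t)).
    apply Rle_trans with (2 * n * 24); [|lra].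
    apply Rmult_le_compat; nra. }
  (* [12 k <= x] keeps the light subtrees below [sqrt n], and [x < 24 k] keeps the
     heavy ones below [96 n / (beta x)]. *)
  destruct (exists_nat_scale x) as (k & Hk & Hkx & Hxk); [lra|].
  assert (Hsplit := le_INR _ _ (dag_size_le_small_heavy eqA t k)).
  rewrite plus_INR in Hsplit.
  set (small := INR ((2 * num_labels eqA t + 1) ^ (2 * k))) in *.
  set (heavy := INR (heavy_count k t)) in *.
  assert (Hsmall : small * x <= 4 * n).
  { apply Rle_trans with (sqrt n * x); [|rewrite Rmult_comm; apply logb_mul_sqrt_le; lra].
    apply Rmult_le_compat_r; [lra|].
    apply Rle_trans with (s ^ (6 * k)).
    - unfold small, s. rewrite <- pow_INR. apply le_INR, pow_odd_le_pow_cube; assumption.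
    - apply pow_le_sqrt; [lra | lra |]. rewrite mult_INR. simpl INR. fold x. lra. }
  assert (Hheavy : heavy * beta * x <= 96 * n).
  { pose proof (heavy_count_bound beta k ltac:(lra) Hk t Hbal) as Hbound.
    assert (0 <= heavy) by apply pos_INR.
    apply Rle_trans with (heavy * beta * (24 * INR k)); [|fold heavy n in Hbound; lra].
    apply Rmult_le_compat_l; [nra | lra]. }
  assert (0 <= small) by apply pos_INR.
  assert (0 <= heavy) by apply pos_INR.
  apply Rle_trans with ((small + heavy) * beta * x); [|nra].
  apply Rmult_le_compat_r; [lra|]. apply Rmult_le_compat_r; lra.
Qed.

Theorem mainTheorem6 :
  exists c0 : R, c0 > 0 /\
  forall beta : R, 0 < beta < 1 ->
  forall (A : Type) (eqA : forall x y : A, {x = y} + {x <> y})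
         (t : tree A) (sigma : nat),
    tree_balanced beta t ->
    (2 <= leaves t)%nat ->
    (2 <= sigma)%nat ->
    (num_labels eqA t <= sigma)%nat ->
    INR (dag_size eqA t) <=
      c0 * (1 + logb (1 + beta) (/ beta)) * INR (leaves t)
        / logb (INR sigma) (INR (leaves t)).
Proof.
  exists 100. split; [lra|].
  intros beta Hb A eqA t sigma Hbal Hn Hs Hlab.
  pose proof (dag_size_mul_logb_le eqA beta t sigma Hb Hbal Hn Hs Hlab) as Hkey.
  pose proof (inv_le_one_plus_logb beta Hb) as Halpha.
  assert (Hx : 0 < logb (INR sigma) (INR (leaves t)))
    by (apply logb_pos; [apply (lt_INR 1) | apply (lt_INR 1)]; lia).
  set (x := logb (INR sigma) (INR (leaves t))) in *.
  set (alpha := 1 + logb (1 + beta) (/ beta)) in *.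
  assert (Halpha1 : 1 <= alpha * beta)
    by (rewrite <- (Rinv_l beta) by lra; apply Rmult_le_compat_r; lra).
  apply Rmult_le_reg_r with (beta * x); [nra|].
  replace (100 * alpha * INR (leaves t) / x * (beta * x))
    with (100 * INR (leaves t) * (alpha * beta)) by (field; lra).
  pose proof (pos_INR (leaves t)). nra.
Qed.
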